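(* Let $M=(m_{r,c})$ be the star matrix of a partition of the hypercube ${\bf Z}_q^n$ into subcubes all of the same dimension, let $i\ne j$ be two columns of $M$, and let $\pi$ be a permutation of ${\bf Z}_q$. Let $R$ be the set of all rows $r$ of $M$ such that both $m_{r,i}$ and $m_{r,j}$ belong to ${\bf Z}_q$. Then, as $r$ ranges over $R$, the value $(m_{r,i}+\pi(m_{r,j}))\bmod q$ takes each value of ${\bf Z}_q$ the same number of times.
   Context: A subcube of ${\bf Z}_q^n$ is obtained by fixing the values of some coordinates and letting the remaining coordinates run through all of ${\bf Z}_q$; its dimension is the number of free coordinates. Its star pattern is the vector of length $n$ over ${\bf Z}_q\cup\{*\}$ with the fixed value in each fixed coordinate and $*$ in each free coordinate. The star matrix of a partition of ${\bf Z}_q^n$ into subcubes (each vector lying in exactly one subcube) is the matrix whose rows are the star patterns of the subcubes of the partition. *)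

From mathcomp Require Import all_boot all_fingroup.
Set Implicit Arguments. Unset Strict Implicit. Unset Printing Implicit Defensive.

(* Z_q is modelled by 'I_q with addition modulo q.
   A star pattern of length n: a function 'I_n -> option 'I_q,
   where None stands for the star symbol *. *)
Definition star_row (n q : nat) := {ffun 'I_n -> option 'I_q}.

Definition in_subcube n q (r : star_row n q) (x : {ffun 'I_n -> 'I_q}) : bool :=
  [forall k, if r k is Some a then x k == a else true].

Definition subcube_dim n q (r : star_row n q) : nat := #|[set k | r k == None]|.

Definition is_partition_star_matrix n q (M : seq (star_row n q)) : Prop :=
  forall x : {ffun 'I_n -> 'I_q}, count (fun r => in_subcube r x) M = 1.

Definition equidimensional n q (M : seq (star_row n q)) : Prop :=
  exists d, all (fun r => subcube_dim r == d) M.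

Definition count_value n q (M : seq (star_row n q)) (i j : 'I_n)
  (pi : {perm 'I_q}) (v : 'I_q) : nat :=
  count (fun r : star_row n q => match r i, r j with
                  | Some a, Some b => (a + pi b) %% q == v
                  | _, _ => false
                  end) M.

(* For v in Z_q let L_v be the level set {x : x_i + pi(x_j) = v}.  The partition
   splits |L_v| over the subcubes.  A subcube that is free in coordinate i (or j)
   meets every L_v in the same number of points, since translating that
   coordinate maps L_v into L_w and preserves the subcube.  A subcube fixing
   x_i = a and x_j = b lies inside L_(a + pi b), so it contributes q^d to |L_v|
   exactly when a + pi b = v.  The same translation argument applied to the
   whole cube gives |L_v| = |L_w|; comparing the two decompositions and
   cancelling q^d yields the claim. *)
From mathcomp Require Import all_boot all_fingroup ssralg zmodp.
Set Implicit Arguments. Unset Strict Implicit.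
Import GRing.Theory.

Section Subcubes.
Variables n q : nat.
Implicit Types (r : star_row n q) (x : {ffun 'I_n -> 'I_q}).

Definition subcube r : {set {ffun 'I_n -> 'I_q}} := [set x | in_subcube r x].

Lemma card_subcube r : #|subcube r| = q ^ subcube_dim r.
Proof.
pose F k : pred 'I_q := if r k is Some a then pred1 a else predT.
have -> : #|subcube r| = #|(family F : simpl_pred {ffun 'I_n -> 'I_q})|.
  apply: eq_card => x; rewrite inE; apply/forallP/familyP => xr k;
  by have := xr k; rewrite /F; case: (r k).
rewrite (card_family (rT := fun _ => 'I_q)) foldrE big_map big_enum /=.
rewrite /subcube_dim -prod_nat_const [RHS]big_mkcond /=.
apply: eq_bigr => k _; rewrite /F inE; case: (r k) => [a|] /=.
  by rewrite card1.
by rewrite cardT size_enum_ord.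
Qed.

Lemma subcube_all_stars : subcube [ffun _ => None] = setT.
Proof. by apply/setP => x; rewrite !inE; apply/forallP => k; rewrite ffunE. Qed.

Lemma card_partition M (A : {set {ffun 'I_n -> 'I_q}}) :
  is_partition_star_matrix M -> #|A| = \sum_(r <- M) #|subcube r :&: A|.
Proof.
move=> partM; rewrite -sum1_card.
transitivity (\sum_(x in A) \sum_(r <- M) (in_subcube r x : nat)).
  by apply: eq_bigr => x _; rewrite -(partM x) -sum1_count big_mkcond.
rewrite exchange_big /=; apply: eq_bigr => r _.
rewrite -sum1_card [LHS]big_mkcond [RHS]big_mkcond /=.
apply: eq_bigr => x _; rewrite !inE; by case: (x \in A); case: in_subcube.
Qed.

Definition set_coord x (k : 'I_n) (a : 'I_q) : {ffun 'I_n -> 'I_q} :=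
  [ffun l => if l == k then a else x l].

Lemma set_coord_inj k (g : 'I_q -> 'I_q) :
  injective g -> injective (fun x => set_coord x k (g (x k))).
Proof.
move=> g_inj x y /ffunP xy; apply/ffunP => l; have := xy l; rewrite !ffunE.
by case: eqP => [-> /g_inj|].
Qed.

Lemma in_subcube_set_coord r x k a :
  r k = None -> in_subcube r (set_coord x k a) = in_subcube r x.
Proof.
move=> rk; apply/forallP/forallP => xr l; have := xr l; rewrite ffunE;
by case: eqP => [->|]; rewrite ?rk.
Qed.

Lemma card_subcube_level_le (T : eqType) (phi : {ffun 'I_n -> 'I_q} -> T)
    r k (g : 'I_q -> 'I_q) (v w : T) :
  injective g -> r k = None ->
  (forall x, phi x = v -> phi (set_coord x k (g (x k))) = w) ->
  #|subcube r :&: [set x | phi x == v]| <= #|subcube r :&: [set x | phi x == w]|.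
Proof.
move=> g_inj rk phi_vw; rewrite -(card_imset _ (@set_coord_inj k g g_inj)).
apply: subset_leq_card; apply/subsetP => _ /imsetP [x + ->].
by rewrite !inE in_subcube_set_coord // => /andP [-> /eqP /phi_vw ->]; rewrite eqxx.
Qed.

End Subcubes.

Section LevelSets.
Variables (n q' : nat) (i j : 'I_n) (pi : {perm 'I_q'.+1}).
Hypothesis neq_ij : i != j.
Local Notation q := q'.+1.
Implicit Types (r : star_row n q) (x : {ffun 'I_n -> 'I_q}) (v w : 'I_q).

Definition level v := [set x : {ffun 'I_n -> 'I_q} | (x i + pi (x j))%R == v].

Definition hits v r : bool :=
  if (r i, r j) is (Some a, Some b) then (a + pi b)%R == v else false.

Definition free_at_ij r := (r i == None) || (r j == None).

Lemma card_level_free r v w :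
  free_at_ij r -> #|subcube r :&: level v| = #|subcube r :&: level w|.
Proof.
have neq_ji : j != i by rewrite eq_sym.
wlog suff card_le : v w / free_at_ij r ->
  #|subcube r :&: level v| <= #|subcube r :&: level w|.
  by move=> r_free; apply/eqP; rewrite eqn_leq !card_le.
rewrite /level => /orP [/eqP ri | /eqP rj].
- apply: (card_subcube_level_le (addIr (w - v)%R) ri) => x <-.
  by rewrite !ffunE eqxx (negbTE neq_ji) addrAC subrKC.
- apply: (card_subcube_level_le (inj_comp (@perm_inj _ pi^-1)
            (inj_comp (addIr (w - v)%R) (@perm_inj _ pi))) rj) => x <-.
  by rewrite !ffunE eqxx (negbTE neq_ij) /= permKV addrA subrKC.
Qed.

Lemma card_level_fixed r v :
  ~~ free_at_ij r -> #|subcube r :&: level v| = hits v r * q ^ subcube_dim r.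
Proof.
rewrite /free_at_ij /hits -card_subcube negb_or.
case ri: (r i) => [a|] //; case rj: (r j) => [b|] // _.
have fixed_ij x : in_subcube r x -> (x i + pi (x j))%R = (a + pi b)%R.
  by move=> /forallP xr; move: (xr i) (xr j); rewrite ri rj => /eqP-> /eqP->.
case: eqP => [<- | neq_v]; rewrite ?mul1n ?mul0n.
  by apply/eq_card => x; rewrite !inE andb_idr // => /fixed_ij ->.
apply/eqP; rewrite cards_eq0; apply/eqP/setP => x; rewrite !inE.
by apply/andP => -[/fixed_ij -> /eqP].
Qed.

Lemma card_level_all_stars v w : #|level v| = #|level w|.
Proof.
rewrite -[level v]setTI -[level w]setTI -(subcube_all_stars n q).
by apply: card_level_free; rewrite /free_at_ij ffunE.
Qed.

Lemma card_level_partition M (d : nat) v :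
  is_partition_star_matrix M -> all (fun r => subcube_dim r == d) M ->
  #|level v| = count (hits v) M * q ^ d
               + \sum_(r <- M | free_at_ij r) #|subcube r :&: level v|.
Proof.
move=> partM dimM; rewrite (card_partition _ partM) (bigID free_at_ij) addnC /=.
congr (_ + _); rewrite big_seq_cond (eq_bigr (fun r => hits v r * q ^ d)) /=.
  rewrite -big_seq_cond -big_distrl -sum1_count /=; congr (_ * _).
  rewrite big_mkcond [RHS]big_mkcond /=.
  apply: eq_bigr => r _; rewrite /free_at_ij /hits.
  by case: (r i) (r j) => [a|] [b|] //=; case: eqP.
move=> r /andP [rM fixed_r].
by rewrite card_level_fixed // (eqP (allP dimM r rM)).
Qed.

End LevelSets.

(* Addition on 'I_q'.+1 is [inZp (a + b)], whose value is [(a + b) %% q'.+1]. *)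
Lemma count_valueE n q' (M : seq (star_row n q'.+1)) i j pi v :
  count_value M i j pi v = count (hits i j pi v) M.
Proof.
by apply: eq_count => r; rewrite /hits; case: (r i) (r j) => [a|] [b|].
Qed.

Theorem lemma3 (q n : nat) (M : seq (star_row n q)) (i j : 'I_n)
  (pi : {perm 'I_q}) :
  is_partition_star_matrix M -> equidimensional M -> i != j ->
  forall v w : 'I_q, count_value M i j pi v = count_value M i j pi w.
Proof.
case: q M pi => [|q'] M pi partM [d dimM] neq_ij v w; first by case: v.
have := card_level_all_stars pi neq_ij v w.
rewrite !(card_level_partition i j pi _ partM dimM) !count_valueE.
under eq_bigr => r r_free do rewrite (card_level_free pi neq_ij v w r_free).
by move/addIn/eqP; rewrite eqn_pmul2r ?expn_gt0 // => /eqP.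
Qed.
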